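(* (Darboux transformation of eigenfunctions.) Let $(\Omega(\mathcal{A}),\mathrm{d},\bar{\mathrm{d}})$ be a bidifferential graded algebra and $\phi\in\mathcal{A}$. Let $\Delta,\Delta'\in\mathcal{A}$ satisfy $\bar{\mathrm{d}}\Delta=(\mathrm{d}\Delta)\Delta$ and $\bar{\mathrm{d}}\Delta'=(\mathrm{d}\Delta')\Delta'$. Let $\psi\in\mathcal{A}$ satisfy $\bar{\mathrm{d}}\psi=(\mathrm{d}\phi)\psi+(\mathrm{d}\psi)\Delta$, let $\theta\in\mathcal{A}$ be invertible with $\bar{\mathrm{d}}\theta=(\mathrm{d}\phi)\theta+(\mathrm{d}\theta)\Delta'$, let $C'\in\mathcal{A}$ with $\mathrm{d}C'=0$, and let $\mathcal{M}\in\mathcal{A}$ satisfy $\bar{\mathrm{d}}\mathcal{M}=(\mathrm{d}\mathcal{M})\Delta$ and $\Delta\mathcal{M}=\mathcal{M}\Delta$. Set $$\phi':=\phi+\theta\Delta'\theta^{-1}-C',\qquad \psi':=(\psi\Delta-\theta\Delta'\theta^{-1}\psi)\,\mathcal{M}.$$ Then $\bar{\mathrm{d}}\psi'=(\mathrm{d}\phi')\,\psi'+(\mathrm{d}\psi')\,\Delta$.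
   Context: $\mathcal{A}$ is a unital associative algebra over $\mathbb{C}$ with identity $I$. A bidifferential graded algebra $(\Omega(\mathcal{A}),\mathrm{d},\bar{\mathrm{d}})$ consists of a graded associative algebra $\Omega(\mathcal{A})=\bigoplus_{r\ge 0}\Omega^r(\mathcal{A})$ with $\Omega^0(\mathcal{A})=\mathcal{A}$ (each $\Omega^r(\mathcal{A})$ an $\mathcal{A}$-bimodule) together with two linear maps $\mathrm{d},\bar{\mathrm{d}}:\Omega^r(\mathcal{A})\to\Omega^{r+1}(\mathcal{A})$ satisfying the graded Leibniz rule $\mathrm{d}(\alpha\beta)=(\mathrm{d}\alpha)\beta+(-1)^r\alpha\,\mathrm{d}\beta$ for $\alpha\in\Omega^r(\mathcal{A})$ (and likewise for $\bar{\mathrm{d}}$), and $\mathrm{d}^2=\bar{\mathrm{d}}^2=0$, $\mathrm{d}\bar{\mathrm{d}}+\bar{\mathrm{d}}\mathrm{d}=0$. *)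

From HB Require Import structures.
From mathcomp Require Import all_boot all_order all_algebra.
Set Implicit Arguments. Unset Strict Implicit. Unset Printing Implicit Defensive.
Import GRing.Theory.
Local Open Scope ring_scope.

(* The total space Omega = \bigoplus_r Omega^r is the unital associative
   K-algebra [Om]; [deg r] is the homogeneous component Omega^r, and
   Omega^0 = A is [deg 0]. *)
Record bidga (K : fieldType) (Om : algType K) := BiDGA {
  deg : nat -> {pred Om};
  deg_0 : forall r, 0 \in deg r;
  deg_D : forall r x y, x \in deg r -> y \in deg r -> x + y \in deg r;
  deg_Z : forall r (a : K) x, x \in deg r -> a *: x \in deg r;
  deg_1 : 1 \in deg 0;
  deg_M : forall r s x y, x \in deg r -> y \in deg s -> x * y \in deg (r + s);
  deg_span : forall x : Om, exists n (f : nat -> Om),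
      (forall i, f i \in deg i) /\ x = \sum_(i < n) f i;
  deg_direct : forall n (f : nat -> Om), (forall i, f i \in deg i) ->
      \sum_(i < n) f i = 0 -> forall i, (i < n)%N -> f i = 0;
  d : Om -> Om;
  db : Om -> Om;
  d_add : forall x y, d (x + y) = d x + d y;
  d_scale : forall (a : K) x, d (a *: x) = a *: d x;
  db_add : forall x y, db (x + y) = db x + db y;
  db_scale : forall (a : K) x, db (a *: x) = a *: db x;
  d_deg : forall r x, x \in deg r -> d x \in deg r.+1;
  db_deg : forall r x, x \in deg r -> db x \in deg r.+1;
  d_leibniz : forall r x y, x \in deg r ->
      d (x * y) = d x * y + (-1) ^+ r * (x * d y);
  db_leibniz : forall r x y, x \in deg r ->
      db (x * y) = db x * y + (-1) ^+ r * (x * db y);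
  d_d : forall x, d (d x) = 0;
  db_db : forall x, db (db x) = 0;
  d_db : forall x, d (db x) + db (d x) = 0
}.

From HB Require Import structures.
From mathcomp Require Import all_boot all_order all_algebra.
Set Implicit Arguments. Unset Strict Implicit. Unset Printing Implicit Defensive.
Import GRing.Theory.
Local Open Scope ring_scope.

(* For a 1-form [a] and E in A, call x in A an eigenfunction for
   (a, E) when  db x = a x + (d x) E;  the hypotheses say that psi is one for
   (d phi, D), theta for (d phi, D'), M for (0, D), and D, D' are ones for
   (0, D) and (0, D') respectively.  The proof has three steps:
   1. right multiplication by an eigenfunction for (0, E) commuting with E
      preserves eigenfunctions for (a, E)  ([eigen_mul]);
   2. P := theta D' theta^-1 solves the Riccati-type equation
      db P = a P - P a + (d P) P  for a = d phi  ([riccati_conj]);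
   3. given such a P, psi D - P psi is an eigenfunction for (a + d P, D)
      ([eigen_darboux]).
   Since d phi' = d phi + d P, the theorem follows by applying step 1 with M. *)

Section DerivationCalculus.
Variables (R : pzRingType) (A : {pred R}) (delta : R -> R).
Hypothesis delta_add : forall x y, delta (x + y) = delta x + delta y.
Hypothesis delta_leibniz :
  forall x y, x \in A -> delta (x * y) = delta x * y + x * delta y.
Hypothesis one_in : 1 \in A.

Lemma delta0 : delta 0 = 0.
Proof. by apply: (addrI (delta 0)); rewrite -delta_add !addr0. Qed.

Lemma deltaN x : delta (- x) = - delta x.
Proof. by apply: (addrI (delta x)); rewrite -delta_add !subrr delta0. Qed.

Lemma deltaB x y : delta (x - y) = delta x - delta y.
Proof. by rewrite delta_add deltaN. Qed.

Lemma delta1 : delta 1 = 0.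
Proof.
have h := @delta_leibniz 1 1 one_in; rewrite !mulr1 mul1r in h.
by apply: (addrI (delta 1)); rewrite addr0 -h.
Qed.

Lemma delta_inv x xi : x \in A -> x * xi = 1 -> xi * x = 1 ->
  delta xi = - (xi * delta x * xi).
Proof.
move=> xA xxi xix.
have e : x * delta xi = - (delta x * xi).
  apply/eqP; rewrite -addr_eq0 addrC -delta_leibniz // xxi delta1 //.
by rewrite -[delta xi]mul1r -xix -mulrA e mulrN mulrA.
Qed.

End DerivationCalculus.

Section Darboux.
Variables (K : fieldType) (Om : algType K) (B : bidga Om).

Local Notation A := (deg B 0).
Local Notation d := (d B).
Local Notation db := (db B).

Lemma deg0_mul x y : x \in A -> y \in A -> x * y \in A.
Proof. exact: deg_M. Qed.

Lemma deg0_sub x y : x \in A -> y \in A -> x - y \in A.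
Proof. by move=> xA yA; rewrite deg_D // -scaleN1r deg_Z. Qed.

Lemma d_leibniz0 x y : x \in A -> d (x * y) = d x * y + x * d y.
Proof. by move=> xA; rewrite (d_leibniz y xA) expr0 mul1r. Qed.

Lemma db_leibniz0 x y : x \in A -> db (x * y) = db x * y + x * db y.
Proof. by move=> xA; rewrite (db_leibniz y xA) expr0 mul1r. Qed.

Lemma d_sub x y : d (x - y) = d x - d y.
Proof. exact: (deltaB (d_add B)). Qed.

Lemma db_sub x y : db (x - y) = db x - db y.
Proof. exact: (deltaB (db_add B)). Qed.

Lemma d_inv x xi : x \in A -> x * xi = 1 -> xi * x = 1 ->
  d xi = - (xi * d x * xi).
Proof. by apply: (delta_inv _ (deg_1 B)) => u v; apply: d_leibniz0. Qed.

Lemma db_inv x xi : x \in A -> x * xi = 1 -> xi * x = 1 ->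
  db xi = - (xi * db x * xi).
Proof. by apply: (delta_inv _ (deg_1 B)) => u v; apply: db_leibniz0. Qed.

Definition eigen (a E x : Om) : Prop := db x = a * x + d x * E.

Definition riccati (a P : Om) : Prop := db P = a * P - P * a + d P * P.

Lemma eigen_mul a E x y : x \in A -> eigen a E x -> eigen 0 E y ->
  E * y = y * E -> eigen a E (x * y).
Proof.
rewrite /eigen => xA ex ey Ey.
rewrite db_leibniz0 // d_leibniz0 // ex ey mul0r add0r.
by rewrite !mulrDl !mulrA -(mulrA _ E y) Ey !mulrA addrA.
Qed.

Lemma riccati_conj a E th thi : E \in A -> th \in A ->
  th * thi = 1 -> thi * th = 1 ->
  eigen 0 E E -> eigen a E th -> riccati a (th * E * thi).
Proof.
move=> EA thA thr thl eE eth.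
have uA : th * E \in A by exact: deg0_mul.
have eu : eigen a E (th * E) by exact: eigen_mul.
have thiK z : z * thi * th = z by rewrite -mulrA thl mulr1.
have thK z : z * th * thi = z by rewrite -mulrA thr mulr1.
have dP : d (th * E * thi) = d (th * E) * thi - th * E * thi * d th * thi.
  by rewrite d_leibniz0 // (d_inv thA thr thl) mulrN !mulrA.
rewrite /riccati dP db_leibniz0 // (db_inv thA thr thl) eu eth.
rewrite !(mulrDl, mulrDr, mulrBl, mulrN, mulNr, mulrA, opprD, opprK).
by rewrite !thK !thiK addrACA.
Qed.

Lemma eigen_darboux a E P psi : P \in A -> psi \in A ->
  eigen 0 E E -> riccati a P -> eigen a E psi ->
  eigen (a + d P) E (psi * E - P * psi).
Proof.
move=> PA psiA eE eP epsi.
have ep1 : eigen a E (psi * E) by exact: eigen_mul.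
rewrite /eigen db_sub ep1 (db_leibniz0 _ PA) eP epsi d_sub (d_leibniz0 _ PA).
rewrite !(mulrDl, mulrDr, mulrBl, mulrBr, mulrN, mulNr, mulrA, opprD, opprK, addrA).
(* Both sides expand to  a psi E + d(psi E) E - a P psi - (d P) P psi
   - P (d psi) E  plus a pair of cancelling terms. *)
rewrite [LHS](@GRing.add Om).[ACl (1*2*3*5*7)*(4*6)].
rewrite [RHS](@GRing.add Om).[ACl (1*5*2*4*7)*(3*6)].
by rewrite !subrr !addr0.
Qed.

End Darboux.

Theorem mainTheorem5 (K : fieldType) (Om : algType K) (B : bidga Om)
  (phi D D' psi th thi C' M : Om)
  (Hphi : phi \in deg B 0) (HD : D \in deg B 0) (HD' : D' \in deg B 0)
  (Hpsi : psi \in deg B 0) (Hth : th \in deg B 0) (Hthi : thi \in deg B 0)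
  (HC' : C' \in deg B 0) (HM : M \in deg B 0)
  (Hthr : th * thi = 1) (Hthl : thi * th = 1)
  (eqD : db B D = d B D * D) (eqD' : db B D' = d B D' * D')
  (eqpsi : db B psi = d B phi * psi + d B psi * D)
  (eqth : db B th = d B phi * th + d B th * D')
  (eqC' : d B C' = 0)
  (eqM : db B M = d B M * D) (commM : D * M = M * D) :
  let phi' := phi + th * D' * thi - C' in
  let psi' := (psi * D - th * D' * thi * psi) * M in
  db B psi' = d B phi' * psi' + d B psi' * D.
Proof.
move=> phi' psi'; set P := th * D' * thi.
have eD : eigen B 0 D D by rewrite /eigen mul0r add0r.
have eD' : eigen B 0 D' D' by rewrite /eigen mul0r add0r.
have eM : eigen B 0 D M by rewrite /eigen mul0r add0r.
have PA : P \in deg B 0 by rewrite !deg0_mul.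
have eP : riccati B (d B phi) P by exact: riccati_conj.
have dphi' : d B phi' = d B phi + d B P by rewrite d_sub eqC' subr0 d_add.
have chiA : psi * D - P * psi \in deg B 0 by rewrite deg0_sub ?deg0_mul.
have echi := eigen_darboux PA Hpsi eD eP eqpsi.
by rewrite dphi'; exact: eigen_mul chiA echi eM commM.
Qed.
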